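(* Let $\mathbf X$ be a random variable with values in $\mathcal X$ and density $p(\mathbf x)$, and let $\mathcal A$ be a finite set. For Q-functions $Q_0,Q_1:\mathcal X\times\mathcal A\to(0,\infty)$ and a real number $\gamma\notin\{0,-1\}$ define $$H_\gamma(Q_0,Q_1)=-\frac1\gamma\,\mathbb E\Bigg[\frac{\sum_{a\in\mathcal A}Q_0(\mathbf X,a)\,Q_1(\mathbf X,a)^{\gamma}}{\big\{\sum_{a\in\mathcal A}Q_1(\mathbf X,a)^{1+\gamma}\big\}^{\frac{\gamma}{1+\gamma}}}\Bigg],\qquad D_\gamma(Q_0,Q_1)=H_\gamma(Q_0,Q_1)-H_\gamma(Q_0,Q_0),$$ assuming all these expectations are finite. Then $D_\gamma(Q_0,Q_1)\ge 0$, with equality if and only if $Q_0\sim Q_1$.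
   Context: A Q-function is a measurable function $Q:\mathcal X\times\mathcal A\to(0,\infty)$. Policy equivalence: $Q_0\sim Q_1$ means there exists a function $\eta:\mathcal X\to(0,\infty)$ such that $Q_1(\mathbf x,a)=\eta(\mathbf x)Q_0(\mathbf x,a)$ for all $a\in\mathcal A$ and (almost) every $\mathbf x\in\mathcal X$, where ''almost every'' is with respect to the distribution of $\mathbf X$. $\mathbb E$ is expectation with respect to $\mathbf X$. *)

From HB Require Import structures.
From mathcomp Require Import all_boot all_order all_algebra.
From mathcomp Require Import all_classical all_reals all_analysis.
Set Implicit Arguments. Unset Strict Implicit. Unset Printing Implicit Defensive.
Import Order.TTheory GRing.Theory Num.Theory.
Local Open Scope ring_scope.
Local Open Scope classical_set_scope.

Section Defs.
Context (d : measure_display) (T : measurableType d) (R : realType) (A : finType).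

Definition is_Qfun (Q : T -> A -> R) : Prop :=
  (forall a, measurable_fun setT (fun x => Q x a)) /\ (forall x a, 0 < Q x a).

Definition Hint (g : R) (Q0 Q1 : T -> A -> R) (x : T) : R :=
  (\sum_(a : A) Q0 x a * Q1 x a `^ g) /
  (\sum_(a : A) Q1 x a `^ (1 + g)) `^ (g / (1 + g)).

Definition Hgamma (P : probability T R) (g : R) (Q0 Q1 : T -> A -> R) : R :=
  - g^-1 * Rintegral P setT (Hint g Q0 Q1).

Definition Dgamma (P : probability T R) (g : R) (Q0 Q1 : T -> A -> R) : R :=
  Hgamma P g Q0 Q1 - Hgamma P g Q0 Q0.

Definition policy_equiv (P : probability T R) (Q0 Q1 : T -> A -> R) : Prop :=
  exists eta : T -> R, (forall x, 0 < eta x) /\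
    {ae P, forall x, forall a, Q1 x a = eta x * Q0 x a}.
End Defs.

(* Write p = 1 + g and h(q0, q1) for the integrand of H_g at a point x, and
   normalise q0 = Q0 x, q1 = Q1 x to unit p-norm: u = q0 / |q0|_p and
   v = q1 / |q1|_p.  Then h(q0, q0) = |q0|_p and
     (h(q0, q0) - h(q0, q1)) / g
       = |q0|_p * sum_a v_a^p phi_p(ln (u_a / v_a)) / (p (p - 1)),
   where phi_p(s) = e^(ps) - 1 - p (e^s - 1) is the remainder in Bernoulli's
   inequality: it has the sign of p (p - 1) and vanishes only at s = 0.  So the
   integrand of D_g is nonnegative and vanishes exactly where q1 is proportional
   to q0, and a nonnegative integrable function has integral zero iff it
   vanishes almost everywhere. *)

From HB Require Import structures.
From mathcomp Require Import all_boot all_order all_algebra.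
From mathcomp Require Import all_classical all_reals all_analysis.
From mathcomp Require Import ring lra.
Set Implicit Arguments. Unset Strict Implicit. Unset Printing Implicit Defensive.
Import Order.TTheory GRing.Theory Num.Theory.
Local Open Scope ring_scope.
Local Open Scope classical_set_scope.

Section BernoulliRemainder.
Variable R : realType.
Implicit Types p s : R.

Definition bernoulli_rem p s := expR (p * s) - 1 - p * (expR s - 1).

Lemma bernoulli_rem0 p : bernoulli_rem p 0 = 0.
Proof. by rewrite /bernoulli_rem mulr0 expR0 !subrr mulr0 subr0. Qed.

Lemma bernoulli_rem_gt0_neg p s : p < 0 -> s != 0 -> 0 < bernoulli_rem p s.
Proof.
move=> p_lt0 s_neq0.
have tangent_ps := expR_gt1Dx (mulf_neq0 (ltr0_neq0 p_lt0) s_neq0).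
have tangent_s := expR_ge1Dx s.
rewrite /bernoulli_rem; nra.
Qed.

(* The substitutions p |-> 1 - p and p |-> 1 / p permute the three regions
   p < 0, 0 < p < 1 and 1 < p; for p < 0 the tangent-line bound e^t >= 1 + t
   already gives the sign. *)
Lemma bernoulli_rem_reflect p s :
  bernoulli_rem p s = expR s * bernoulli_rem (1 - p) (- s).
Proof.
rewrite /bernoulli_rem (_ : (1 - p) * - s = p * s - s); last by ring.
rewrite expRB expRN; field; by rewrite expR_eq0.
Qed.

Lemma bernoulli_rem_invert p s : p != 0 ->
  bernoulli_rem p s = - p * bernoulli_rem p^-1 (p * s).
Proof. by move=> p_neq0; rewrite /bernoulli_rem mulKf //; field. Qed.

Lemma bernoulli_rem_gt0 p s : (p < 0) || (1 < p) -> s != 0 ->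
  0 < bernoulli_rem p s.
Proof.
case/orP=> [p_lt0 | p_gt1] s_neq0; first exact: bernoulli_rem_gt0_neg.
rewrite bernoulli_rem_reflect mulr_gt0 ?expR_gt0 //.
by apply: bernoulli_rem_gt0_neg; rewrite ?oppr_eq0 // subr_lt0.
Qed.

Lemma bernoulli_rem_lt0 p s : 0 < p < 1 -> s != 0 -> bernoulli_rem p s < 0.
Proof.
case/andP=> p_gt0 p_lt1 s_neq0.
rewrite (bernoulli_rem_invert s (lt0r_neq0 p_gt0)) mulNr oppr_lt0.
rewrite mulr_gt0 // bernoulli_rem_gt0 ?mulf_neq0 ?(lt0r_neq0 p_gt0) //.
by rewrite invf_gt1 // p_lt1 orbT.
Qed.

Lemma bernoulli_rem_div_gt0 p s : p != 0 -> p != 1 -> s != 0 ->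
  0 < bernoulli_rem p s / (p * (p - 1)).
Proof.
move=> p_neq0 p_neq1 s_neq0.
have [p_lt0 | p_gt0 | p_eq0] := ltgtP p 0; last by rewrite p_eq0 eqxx in p_neq0.
  by rewrite divr_gt0 ?bernoulli_rem_gt0 ?p_lt0 //; nra.
have [p_lt1 | p_gt1 | p_eq1] := ltgtP p 1; last by rewrite p_eq1 eqxx in p_neq1.
  by rewrite ltr_ndivlMr ?mul0r ?bernoulli_rem_lt0 ?p_gt0 ?p_lt1 //; nra.
by rewrite divr_gt0 ?bernoulli_rem_gt0 ?p_gt1 ?orbT //; nra.
Qed.

End BernoulliRemainder.

Section LogSumExp.
Variables (R : realType) (A : finType) (p : R).
Implicit Types (x : A -> R) (c : R).

Definition lse x := ln (\sum_a expR (p * x a)) / p.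

Definition lognormalize x a := x a - lse x.

Definition softmax x a := expR (p * lognormalize x a).

Hypothesis p_neq0 : p != 0.
Variable a0 : A.

Lemma sum_expR_gt0 x : 0 < \sum_a expR (x a).
Proof.
rewrite (bigD1 a0) //= ltr_pwDl ?expR_gt0 //.
by apply: sumr_ge0 => a _; exact: expR_ge0.
Qed.

Lemma expR_lse x : expR (p * lse x) = \sum_a expR (p * x a).
Proof. by rewrite /lse mulrC divfK // lnK // posrE sum_expR_gt0. Qed.

Lemma lse_shift c x : lse (fun a => c + x a) = c + lse x.
Proof.
rewrite /lse; under eq_bigr do rewrite mulrDr expRD.
by rewrite -mulr_sumr lnM ?posrE ?expR_gt0 ?sum_expR_gt0 // expRK; field.
Qed.

Lemma sum_softmax x : \sum_a softmax x a = 1.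
Proof.
under eq_bigr do rewrite /softmax /lognormalize mulrBr expRB.
by rewrite -mulr_suml -expR_lse divff // expR_eq0.
Qed.

End LogSumExp.

Lemma expR_bernoulli_rem (R : realType) (g u v : R) :
  expR ((1 + g) * v) * bernoulli_rem (1 + g) (u - v) =
  expR ((1 + g) * u) - expR ((1 + g) * v) -
  (1 + g) * (expR (u + g * v) - expR ((1 + g) * v)).
Proof.
have e1 : (1 + g) * u = (1 + g) * v + (1 + g) * (u - v) by ring.
have e2 : u + g * v = (1 + g) * v + (u - v) by ring.
by rewrite /bernoulli_rem e1 e2 !expRD; ring.
Qed.

Section LogHolder.
Variables (R : realType) (A : finType) (g : R).
Implicit Types (x y : A -> R) (c : R).

Definition lhint x y := \sum_a expR (x a + g * lognormalize (1 + g) y a).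

Hypothesis g1_neq0 : 1 + g != 0.
Variable a0 : A.

Lemma lhint_diag x : lhint x x = expR (lse (1 + g) x).
Proof.
have split_exp a : x a + g * lognormalize (1 + g) x a =
    lse (1 + g) x + (1 + g) * lognormalize (1 + g) x a.
  by rewrite /lognormalize; ring.
rewrite /lhint; under eq_bigr do rewrite split_exp expRD.
by rewrite -mulr_sumr sum_softmax // mulr1.
Qed.

Lemma lhint_shift c x y : lhint x (fun a => c + y a) = lhint x y.
Proof.
rewrite /lhint /lognormalize lse_shift //; apply: eq_bigr => a _.
by congr expR; ring.
Qed.

Lemma lhint_gap x y : g != 0 ->
  g^-1 * (lhint x x - lhint x y) = expR (lse (1 + g) x) *
    \sum_a softmax (1 + g) y a * (bernoulli_rem (1 + g)
      (lognormalize (1 + g) x a - lognormalize (1 + g) y a) / ((1 + g) * g)).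
Proof.
move=> g_neq0.
have lhint_xy : lhint x y = expR (lse (1 + g) x) *
    \sum_a expR (lognormalize (1 + g) x a + g * lognormalize (1 + g) y a).
  rewrite /lhint mulr_sumr; apply: eq_bigr => a _.
  by rewrite -expRD /lognormalize; congr expR; ring.
under eq_bigr do rewrite mulrA expR_bernoulli_rem.
rewrite -mulr_suml !sumrB -mulr_sumr sumrB lhint_diag lhint_xy.
rewrite [X in X - _ - _](sum_softmax g1_neq0 a0 x) (sum_softmax g1_neq0 a0 y).
by field; rewrite g_neq0 g1_neq0.
Qed.

Hypothesis g_neq0 : g != 0.

Lemma bernoulli_rem1D_div_gt0 s : s != 0 ->
  0 < bernoulli_rem (1 + g) s / ((1 + g) * g).
Proof.
move=> s_neq0; have g_eq : 1 + g - 1 = g by rewrite addrC addKr.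
have g_neq1 : 1 + g != 1 by rewrite -subr_eq0 g_eq.
by move: (bernoulli_rem_div_gt0 g1_neq0 g_neq1 s_neq0); rewrite g_eq.
Qed.

Lemma bernoulli_rem1D_div_ge0 s : 0 <= bernoulli_rem (1 + g) s / ((1 + g) * g).
Proof.
have [-> | s_neq0] := eqVneq s 0; first by rewrite bernoulli_rem0 mul0r.
exact/ltW/bernoulli_rem1D_div_gt0.
Qed.

Lemma lhint_gap_ge0 x y : 0 <= g^-1 * (lhint x x - lhint x y).
Proof.
rewrite lhint_gap // mulr_ge0 ?expR_ge0 // sumr_ge0 // => a _.
exact: mulr_ge0 (expR_ge0 _) (bernoulli_rem1D_div_ge0 _).
Qed.

Lemma lhint_eq_shift x y : lhint x y = lhint x x ->
  forall a, y a = lse (1 + g) y - lse (1 + g) x + x a.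
Proof.
move=> eq_xy a; have := lhint_gap x y g_neq0; rewrite eq_xy subrr mulr0.
move=> /esym/eqP; rewrite mulf_eq0 expR_eq0 /= => /eqP/psumr_eq0P term0.
have /(_ a isT)/eqP :=
  term0 (fun a _ => mulr_ge0 (expR_ge0 _) (bernoulli_rem1D_div_ge0 _)).
rewrite mulf_eq0 expR_eq0 /= => /eqP; apply: contra_eq => y_neq.
apply/lt0r_neq0/bernoulli_rem1D_div_gt0; rewrite subr_eq0.
apply: contra y_neq => /eqP; rewrite /lognormalize => e.
by rewrite addrAC -addrA e addrC subrK.
Qed.

End LogHolder.

Section Hint.
Variables (R : realType) (A : finType) (g : R).

Definition hint (q0 q1 : A -> R) :=
  (\sum_a q0 a * q1 a `^ g) / (\sum_a q1 a `^ (1 + g)) `^ (g / (1 + g)).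

Hypotheses (g_neq0 : g != 0) (g1_neq0 : 1 + g != 0).

Lemma hint_empty (q0 q1 : A -> R) : (@predT A) =1 xpred0 -> hint q0 q1 = 0.
Proof. by move=> A0; rewrite /hint big_pred0 // mul0r. Qed.

Lemma hint_lhint (a0 : A) (q0 q1 : A -> R) :
  (forall a, 0 < q0 a) -> (forall a, 0 < q1 a) ->
  hint q0 q1 = lhint g (fun a => ln (q0 a)) (fun a => ln (q1 a)).
Proof.
move=> q0_gt0 q1_gt0.
have powR_ln y t : 0 < y -> y `^ t = expR (t * ln y).
  by move=> y_gt0; rewrite /powR gt_eqF.
rewrite /hint [X in _ / X `^ _](eq_bigr (fun a => expR ((1 + g) * ln (q1 a)))).
  2: by move=> a _; exact: powR_ln.
rewrite /lhint /lognormalize /lse powR_ln ?sum_expR_gt0 // mulr_suml.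
apply: eq_bigr => a _ /=; rewrite powR_ln // -{1}[q0 a]lnK ?posrE //.
by rewrite -expRD -expRB; congr expR; ring.
Qed.

Lemma hint_gap_ge0 (q0 q1 : A -> R) :
  (forall a, 0 < q0 a) -> (forall a, 0 < q1 a) ->
  0 <= g^-1 * (hint q0 q0 - hint q0 q1).
Proof.
move=> q0_gt0 q1_gt0; have [a0 _ | A0] := pickP (@predT A).
  rewrite (hint_lhint a0 q0_gt0 q1_gt0) (hint_lhint a0 q0_gt0 q0_gt0).
  exact: lhint_gap_ge0.
by rewrite !hint_empty // subrr mulr0.
Qed.

Lemma hint_eq_scale (q0 q1 : A -> R) :
  (forall a, 0 < q0 a) -> (forall a, 0 < q1 a) -> hint q0 q1 = hint q0 q0 ->
  forall a, q1 a = expR (lse (1 + g) (fun a => ln (q1 a)) -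
                         lse (1 + g) (fun a => ln (q0 a))) * q0 a.
Proof.
move=> q0_gt0 q1_gt0 + a.
rewrite (hint_lhint a q0_gt0 q1_gt0) (hint_lhint a q0_gt0 q0_gt0).
move=> /(lhint_eq_shift g1_neq0 a g_neq0) shift.
by rewrite -[q1 a]lnK ?posrE // shift expRD lnK ?posrE.
Qed.

Lemma hint_scale (q0 q1 : A -> R) (e : R) : (forall a, 0 < q0 a) -> 0 < e ->
  (forall a, q1 a = e * q0 a) -> hint q0 q1 = hint q0 q0.
Proof.
move=> q0_gt0 e_gt0 q1E; have [a0 _ | A0] := pickP (@predT A); last first.
  by rewrite !hint_empty.
have q1_gt0 a : 0 < q1 a by rewrite q1E mulr_gt0.
rewrite (hint_lhint a0 q0_gt0 q1_gt0) (hint_lhint a0 q0_gt0 q0_gt0).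
have -> : (fun a => ln (q1 a)) = (fun a => ln e + ln (q0 a)).
  by apply/funext => a; rewrite q1E lnM ?posrE.
exact: lhint_shift.
Qed.

End Hint.

Lemma ge0_Rintegral_eq0 (d : measure_display) (T : measurableType d) (R : realType)
    (mu : {measure set T -> \bar R}) (D : set T) (f : T -> R) :
  measurable D -> mu.-integrable D (EFin \o f) -> (forall x, D x -> 0 <= f x) ->
  \int[mu]_(x in D) f x = 0 <-> {ae mu, forall x, D x -> f x = 0}.
Proof.
move=> mD intf f_ge0.
have int_abs : (\int[mu]_(x in D) `|(f x)%:E| = \int[mu]_(x in D) (f x)%:E)%E.
  by apply: eq_integral => x /set_mem Dx; rewrite gee0_abs ?lee_fin ?f_ge0.
transitivity (\int[mu]_(x in D) `|(f x)%:E| = 0)%E.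
  rewrite int_abs -[X in _ <-> X = _](fineK (integrable_fin_num mD intf)).
  by rewrite /Rintegral; split => [-> | []].
rewrite ae_eq_integral_abs //; last exact: measurable_int intf.
split; apply: filterS => x + Dx => /(_ Dx); first by case.
by move=> /= ->.
Qed.

Lemma Dgamma_Rintegral (d : measure_display) (T : measurableType d) (R : realType)
    (A : finType) (P : probability T R) (g : R) (Q0 Q1 : T -> A -> R) :
  P.-integrable setT (EFin \o Hint g Q0 Q1) ->
  P.-integrable setT (EFin \o Hint g Q0 Q0) ->
  Dgamma P g Q0 Q1 =
    Rintegral P setT (fun x => g^-1 * (hint g (Q0 x) (Q0 x) - hint g (Q0 x) (Q1 x))).
Proof.
move=> int01 int00.
have int_diff : P.-integrable setT
    (EFin \o (fun x => hint g (Q0 x) (Q0 x) - hint g (Q0 x) (Q1 x))).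
  exact: (eq_integrable measurableT _ _ _ (integrableB measurableT int00 int01)).
have -> : Rintegral P setT
    (fun x => g^-1 * (hint g (Q0 x) (Q0 x) - hint g (Q0 x) (Q1 x))) =
    g^-1 * (Rintegral P setT (Hint g Q0 Q0) - Rintegral P setT (Hint g Q0 Q1)).
  by rewrite (RintegralZl _ measurableT int_diff) (RintegralB measurableT int00 int01).
rewrite /Dgamma /Hgamma.
generalize (Rintegral P setT (Hint g Q0 Q0)) (Rintegral P setT (Hint g Q0 Q1)).
by move=> I00 I01; ring.
Qed.

Theorem theorem1 (d : measure_display) (T : measurableType d) (R : realType)
  (A : finType) (mu : {sigma_finite_measure set T -> \bar R})
  (P : probability T R) (HPmu : P `<< mu)
  (g : R) (Q0 Q1 : T -> A -> R)
  (hg0 : g != 0) (hg1 : g != -1)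
  (hQ0 : is_Qfun Q0) (hQ1 : is_Qfun Q1)
  (hint01 : P.-integrable setT (EFin \o Hint g Q0 Q1))
  (hint00 : P.-integrable setT (EFin \o Hint g Q0 Q0)) :
  0 <= Dgamma P g Q0 Q1 /\ (Dgamma P g Q0 Q1 = 0 <-> policy_equiv P Q0 Q1).
Proof.
have g1_neq0 : 1 + g != 0 by rewrite addrC addr_eq0.
case: hQ0 hQ1 => [_ Q0_gt0] [_ Q1_gt0].
have gap_ge0 x := hint_gap_ge0 hg0 g1_neq0 (Q0_gt0 x) (Q1_gt0 x).
have int_gap : P.-integrable setT
    (EFin \o (fun x => g^-1 * (hint g (Q0 x) (Q0 x) - hint g (Q0 x) (Q1 x)))).
  apply: (eq_integrable measurableT _ _ _
    (integrableZl measurableT g^-1 (integrableB measurableT hint00 hint01))).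
  by move=> x _; rewrite /= -EFinB -EFinM.
rewrite Dgamma_Rintegral //; split; first exact: Rintegral_ge0.
rewrite (ge0_Rintegral_eq0 measurableT int_gap (fun x _ => gap_ge0 x)); split.
- (* eta x is the ratio of the (1 + g)-norms of Q1 x and Q0 x. *)
  move=> gap0; exists (fun x => expR (lse (1 + g) (fun a => ln (Q1 x a)) -
                                      lse (1 + g) (fun a => ln (Q0 x a)))).
  split=> [x | ]; first exact: expR_gt0.
  apply: filterS gap0 => x /(_ I) /eqP.
  rewrite mulf_eq0 invr_eq0 (negbTE hg0) subr_eq0 => /eqP/esym.
  exact: hint_eq_scale.
- case=> eta [eta_gt0]; apply: filterS => x Q1E _.
  by rewrite (hint_scale g1_neq0 (Q0_gt0 x) (eta_gt0 x) Q1E) subrr mulr0.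
Qed.
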